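(* Let $a,b,c\in\mathbb R$ with $0<b<2$, $b\ne1$ and $c\ne0$, and let $\alpha(n)=n^a\exp(c\,n^b)$ for $n\ge1$. Set $\kappa:=\operatorname{sgn}(b(b-1)c)$. Define $$A(n):=-\frac an+bc\,n^{b-1},\qquad \delta(n):=\left(\kappa\left(-\frac{a}{2n^2}+\frac{b(b-1)c}{2n^{2-b}}\right)\right)^{1/2}.$$ The quantity under the square root is positive for all sufficiently large $n$. Then, for every degree $m\ge2$, the sequence $\alpha$ is log-polynomial with data $\{A(n),\kappa,\delta(n)\}$.
   Context: Log-polynomial: let $m\ge2$ be an integer and $\kappa\in\{1,-1\}$. A sequence of positive reals $\alpha(n)$ is log-polynomial of degree $m$ with data $\{A(n),\kappa,\delta(n)\}$ if there are real sequences $A(n),\delta(n),g_k(n)$ ($3\le k\le m$) such that $$\log\left(\frac{\alpha(n+j)}{\alpha(n)}\right)=A(n)j+\kappa\delta(n)^2j^2+\sum_{k=3}^m g_k(n)j^k+o(\delta(n)^{m+1})\quad(n\to\infty)$$ for $j=1,\dots,m+1$. In addition, $\delta(n)>0$ (for all large $n$), $\delta(n)\to0$ and $g_k(n)=o(\delta(n)^k)$. *)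

From Stdlib Require Import Reals Lra Lia List.
Open Scope R_scope.

Definition little_o (u v : nat -> R) : Prop :=
  forall eps : R, 0 < eps ->
    exists N : nat, forall n : nat, (N <= n)%nat -> Rabs (u n) <= eps * Rabs (v n).

Definition tends_to_0 (u : nat -> R) : Prop :=
  forall eps : R, 0 < eps ->
    exists N : nat, forall n : nat, (N <= n)%nat -> Rabs (u n) < eps.

(* \sum_{k=3}^{m} f k  (empty sum = 0 when m < 3) *)
Definition sum_3_to (m : nat) (f : nat -> R) : R :=
  fold_right Rplus 0 (map f (seq 3 (m - 2))).

Definition log_polynomial (m : nat) (alpha A delta : nat -> R) (kappa : R) : Prop :=
  (2 <= m)%nat /\
  (kappa = 1 \/ kappa = -1) /\
  (forall n : nat, (1 <= n)%nat -> 0 < alpha n) /\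
  (exists N : nat, forall n : nat, (N <= n)%nat -> 0 < delta n) /\
  tends_to_0 delta /\
  exists g : nat -> nat -> R,
    (forall k : nat, (3 <= k <= m)%nat -> little_o (g k) (fun n => delta n ^ k)) /\
    (forall j : nat, (1 <= j <= m + 1)%nat ->
       little_o
         (fun n => ln (alpha (n + j)%nat / alpha n)
                   - (A n * INR j + kappa * delta n ^ 2 * INR j ^ 2
                      + sum_3_to m (fun k => g k n * INR j ^ k)))
         (fun n => delta n ^ (m + 1))).

Definition sgn (x : R) : R :=
  if Rlt_dec 0 x then 1 else if Rlt_dec x 0 then -1 else 0.

Definition alpha_abc (a b c : R) (n : nat) : R :=
  Rpower (INR n) a * exp (c * Rpower (INR n) b).

Definition kappa_abc (a b c : R) : R := sgn (b * (b - 1) * c).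

Definition A_abc (a b c : R) (n : nat) : R :=
  a / INR n + b * c * Rpower (INR n) (b - 1).

Definition delta_sq_abc (a b c : R) (n : nat) : R :=
  kappa_abc a b c * (- a / (2 * INR n ^ 2) + b * (b - 1) * c / (2 * Rpower (INR n) (2 - b))).

Definition delta_abc (a b c : R) (n : nat) : R := sqrt (delta_sq_abc a b c n).

From Stdlib Require Import Reals Lra Lia List Factorial.
From Coquelicot Require Import Coquelicot.
Open Scope R_scope.

(* With [x = j/n] one has exactly
     [log (alpha(n+j)/alpha(n)) = a log(1+x) + c n^b ((1+x)^b - 1)].
   Expanding [log(1+x)] and [(1+x)^b] by Taylor's formula of order [m] at [0]
   gives a polynomial in [j] whose coefficients [g_k(n)] are [O(n^(b-k))]; the
   Lagrange remainders are [O(x^(m+1))], so the total error is [O(n^(b-m-1))]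
   uniformly in [1 <= j <= m+1]. The coefficients [g_1] and [g_2] are exactly
   [A(n)] and [kappa delta(n)^2]. Finally [delta(n)^2] is bounded above and below
   by multiples of [n^(b-2)] (the term [b(b-1)c n^(b-2)/2] dominates [a/(2n^2)]),
   and a general comparison lemma turns [O(n^(b-q))] into [o(delta(n)^q)] for
   every [q >= 3]. *)

Lemma Rpower_1_base (y : R) : Rpower 1 y = 1.
Proof. unfold Rpower. now rewrite ln_1, Rmult_0_r, exp_0. Qed.

Lemma exp_le_mono (x y : R) : x <= y -> exp x <= exp y.
Proof. intros [Hlt | ->]; [left; now apply exp_increasing | lra]. Qed.

Lemma Rpower_pos (x e : R) : 0 < Rpower x e.
Proof. apply exp_pos. Qed.

(* [(x^e)^k = x^(e k)]; no positivity of [x] is needed since [Rpower x e > 0]. *)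
Lemma Rpower_pow_mult (x e : R) (k : nat) : Rpower x e ^ k = Rpower x (e * INR k).
Proof. rewrite <- Rpower_pow by apply Rpower_pos. apply Rpower_mult. Qed.

Lemma eventually_Rpower_ge (p M : R) :
  0 < p -> eventually (fun n => M <= Rpower (INR n) p).
Proof.
  intros Hp. destruct (INR_unbounded (exp (M / p))) as [N HN].
  exists N. intros n Hn.
  assert (Hn' : exp (M / p) < INR n) by (apply le_INR in Hn; lra).
  assert (Hln : M / p < ln (INR n)).
  { rewrite <- (ln_exp (M / p)). apply ln_increasing; [apply exp_pos | lra]. }
  apply Rle_trans with (exp M); [pose proof (exp_ineq1_le M); lra |].
  left. apply exp_increasing. replace M with (p * (M / p)) at 1 by (field; lra).
  apply Rmult_lt_compat_l; lra.
Qed.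

(* Falling factorial [e (e-1) ... (e-k+1)]: the [k]-th derivative of [x^e] is
   [falling k e * x^(e-k)]. *)
Fixpoint falling (k : nat) (e : R) : R :=
  match k with O => 1 | S k' => falling k' e * (e - INR k') end.

Lemma Derive_n_pow1p_step (f : R -> R) (k : nat) (C d : R) :
  (forall x, -1 < x -> Derive_n f k x = C * Rpower (1 + x) d) ->
  forall x, -1 < x ->
    Derive_n f (S k) x = C * d * Rpower (1 + x) (d - 1) /\ ex_derive_n f (S k) x.
Proof.
  intros Hk x Hx.
  assert (Hloc : locally x (fun t => C * Rpower (1 + t) d = Derive_n f k t)).
  { apply (locally_open (fun t => -1 < t)); [apply open_gt | | exact Hx].
    intros t Ht. symmetry. now apply Hk. }
  assert (Hd : is_derive (fun t => C * Rpower (1 + t) d) x (C * d * Rpower (1 + x) (d - 1))).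
  { replace (C * d * Rpower (1 + x) (d - 1)) with (C * (1 * (d * Rpower (1 + x) (d - 1)))) by ring.
    apply is_derive_scal, (is_derive_comp (fun t => Rpower t d) (fun t => 1 + t)).
    - apply is_derive_Reals, derivable_pt_lim_power. lra.
    - auto_derive; auto; ring. }
  split; simpl.
  - rewrite <- (Derive_ext_loc _ _ _ Hloc). now apply is_derive_unique.
  - apply (ex_derive_ext_loc _ _ _ Hloc). now exists (C * d * Rpower (1 + x) (d - 1)).
Qed.

Lemma Derive_n_pow1p_family (f : R -> R) (k0 : nat) (C d : R) :
  (forall x, -1 < x -> Derive_n f k0 x = C * Rpower (1 + x) d) ->
  forall i x, -1 < x ->
    Derive_n f (i + k0) x = C * falling i d * Rpower (1 + x) (d - INR i)
    /\ ex_derive_n f (S (i + k0)) x.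
Proof.
  intros H0.
  assert (Hformula : forall i x, -1 < x ->
            Derive_n f (i + k0) x = C * falling i d * Rpower (1 + x) (d - INR i)).
  { induction i as [| i IH]; intros x Hx.
    - simpl. rewrite Rminus_0_r, Rmult_1_r. now apply H0.
    - destruct (Derive_n_pow1p_step f (i + k0) _ _ IH x Hx) as [Hd _].
      change (S i + k0)%nat with (S (i + k0)). rewrite Hd, S_INR. simpl falling.
      replace (d - (INR i + 1)) with (d - INR i - 1) by ring. ring. }
  intros i x Hx. split; [now apply Hformula |].
  exact (proj2 (Derive_n_pow1p_step f (i + k0) _ _ (Hformula i) x Hx)).
Qed.

Definition pow1p (e x : R) : R := Rpower (1 + x) e.
Definition log1p (x : R) : R := ln (1 + x).

Lemma Derive_n_pow1p (e : R) (k : nat) (x : R) : -1 < x ->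
  Derive_n (pow1p e) k x = falling k e * Rpower (1 + x) (e - INR k)
  /\ ex_derive_n (pow1p e) k x.
Proof.
  intros Hx.
  assert (H0 : forall t, -1 < t -> Derive_n (pow1p e) 0 t = 1 * Rpower (1 + t) e)
    by (intros; simpl; unfold pow1p; ring).
  pose proof (Derive_n_pow1p_family _ _ _ _ H0) as Hfam.
  destruct (Hfam k x Hx) as [Hd _]. rewrite Nat.add_0_r, Rmult_1_l in Hd.
  split; [exact Hd |]. destruct k as [| k]; [exact I |].
  destruct (Hfam k x Hx) as [_ Hex]. now rewrite Nat.add_0_r in Hex.
Qed.

(* [log1p' = (1+x)^(-1)], so the derivatives of [log1p] are those of [pow1p (-1)]
   shifted by one. *)
Lemma Derive_n_log1p (k : nat) (x : R) : -1 < x ->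
  Derive_n log1p (S k) x = falling k (-1) * Rpower (1 + x) (-1 - INR k)
  /\ ex_derive_n log1p k x.
Proof.
  assert (Hder : forall t, -1 < t -> is_derive log1p t (Rpower (1 + t) (-1))).
  { intros t Ht. unfold log1p.
    replace (Rpower (1 + t) (-1)) with (1 * / (1 + t))
      by (replace (-1) with (- (1)) by ring; rewrite Rpower_Ropp, Rpower_1 by lra; ring).
    apply (is_derive_comp ln (fun u => 1 + u)).
    - apply is_derive_Reals, derivable_pt_lim_ln. lra.
    - auto_derive; auto; ring. }
  assert (H1 : forall t, -1 < t -> Derive_n log1p 1 t = 1 * Rpower (1 + t) (-1))
    by (intros t Ht; simpl; rewrite Rmult_1_l; now apply is_derive_unique, Hder).
  pose proof (Derive_n_pow1p_family _ _ _ _ H1) as Hfam.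
  intros Hx. destruct (Hfam k x Hx) as [Hd _].
  rewrite Nat.add_1_r, Rmult_1_l in Hd. split; [exact Hd |].
  destruct k as [| [| k]]; [exact I | now exists (Rpower (1 + x) (-1)); apply Hder |].
  destruct (Hfam k x Hx) as [_ Hex]. now rewrite Nat.add_1_r in Hex.
Qed.

(* On [0 <= z <= 1] we have [0 <= ln (1+z) <= 1], hence [(1+z)^E <= e^|E|]. *)
Lemma Rpower_1p_le (z E : R) : 0 <= z <= 1 -> Rpower (1 + z) E <= exp (Rabs E).
Proof.
  intros Hz. unfold Rpower. apply exp_le_mono.
  assert (Hlo : 0 <= ln (1 + z)) by (rewrite <- ln_1; apply ln_le; lra).
  assert (Hhi : ln (1 + z) <= 1).
  { apply Rle_trans with (ln (exp 1)); [| rewrite ln_exp; lra].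
    apply ln_le; [lra |]. pose proof (exp_ineq1_le 1). lra. }
  destruct (Rle_dec 0 E) as [HE | HE].
  - rewrite Rabs_pos_eq by lra. nra.
  - rewrite Rabs_left by lra. nra.
Qed.

Definition taylor_rem (f : R -> R) (m : nat) (x : R) : R :=
  f x - sum_f_R0 (fun k => x ^ k / INR (fact k) * Derive_n f k 0) m.

Lemma taylor_rem_bound (f : R -> R) (m : nat) (D E : R) :
  (forall k x, -1 < x -> ex_derive_n f k x) ->
  (forall x, -1 < x -> Derive_n f (S m) x = D * Rpower (1 + x) E) ->
  forall x, 0 < x <= 1 -> Rabs (taylor_rem f m x) <= Rabs D * exp (Rabs E) * x ^ S m.
Proof.
  intros Hex HD x Hx.
  destruct (Taylor_Lagrange f m 0 x) as [z [Hz Heq]]; [lra | intros; apply Hex; lra |].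
  unfold taylor_rem. rewrite Heq, Rminus_0_r, HD by lra.
  set (T := sum_f_R0 _ m).
  replace (T + _ - T) with (x ^ S m / INR (fact (S m)) * (D * Rpower (1 + z) E)) by ring.
  assert (Hfact : 1 <= INR (fact (S m))) by (apply (le_INR 1), lt_O_fact).
  assert (Hxm : 0 < x ^ S m) by (apply pow_lt; lra).
  assert (Hquot : 0 <= x ^ S m / INR (fact (S m)) <= x ^ S m).
  { split; [apply Rdiv_le_0_compat; lra |].
    apply Rmult_le_reg_r with (INR (fact (S m))); [lra |].
    unfold Rdiv. rewrite Rmult_assoc, Rinv_l by lra. nra. }
  pose proof (Rpower_1p_le z E ltac:(lra)) as Hpow.
  pose proof (Rpower_pos (1 + z) E). pose proof (Rabs_pos D).
  rewrite !Rabs_mult, (Rabs_pos_eq (Rpower _ _)), Rabs_pos_eq by lra.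
  apply Rle_trans with (x ^ S m * (Rabs D * exp (Rabs E))); [| lra].
  apply Rmult_le_compat; try nra.
Qed.

(* Taylor coefficients at [0] of [log1p] and [pow1p e] (without the [1/k!]). *)
Definition log1p_coef (k : nat) : R :=
  match k with O => 0 | S k' => falling k' (-1) end.

Lemma Derive_n_log1p_0 (k : nat) : Derive_n log1p k 0 = log1p_coef k.
Proof.
  destruct k as [| k]; simpl log1p_coef.
  - simpl. unfold log1p. now rewrite Rplus_0_r, ln_1.
  - destruct (Derive_n_log1p k 0) as [-> _]; [lra |].
    rewrite Rplus_0_r, Rpower_1_base. ring.
Qed.

Lemma Derive_n_pow1p_0 (e : R) (k : nat) : Derive_n (pow1p e) k 0 = falling k e.
Proof.
  destruct (Derive_n_pow1p e k 0) as [-> _]; [lra |].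
  rewrite Rplus_0_r, Rpower_1_base. ring.
Qed.

(* The coefficient [g_k(n)] of [j^k] in the expansion of [log (alpha(n+j)/alpha(n))]:
   [a/k! * log1p^(k)(0) n^-k + c/k! * b(b-1)...(b-k+1) n^(b-k)]. *)
Definition coef (a b c : R) (k n : nat) : R :=
  (a * log1p_coef k * Rpower (INR n) (- INR k) + c * falling k b * Rpower (INR n) (b - INR k))
  / INR (fact k).

(* [g_0(n) = c n^b] cancels the constant [-c n^b] of the log-ratio. *)
Lemma coef_0 (a b c : R) (n : nat) : coef a b c 0 n = c * Rpower (INR n) b.
Proof. unfold coef. simpl. rewrite Rminus_0_r. field. Qed.

Lemma coef_1 (a b c : R) (n : nat) : (1 <= n)%nat -> coef a b c 1 n = A_abc a b c n.
Proof.
  intros Hn. assert (HN : 0 < INR n) by (apply lt_0_INR; lia).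
  unfold coef, A_abc. simpl.
  replace (- (1)) with (- INR 1) by reflexivity.
  rewrite Rpower_Ropp, Rpower_1 by (simpl; lra). field. lra.
Qed.

Lemma coef_2 (a b c : R) (n : nat) : (1 <= n)%nat ->
  coef a b c 2 n = - a / (2 * INR n ^ 2) + b * (b - 1) * c / (2 * Rpower (INR n) (2 - b)).
Proof.
  intros Hn. assert (HN : 0 < INR n) by (apply lt_0_INR; lia).
  pose proof (Rpower_pos (INR n) (2 - b)).
  unfold coef. simpl log1p_coef. simpl falling. simpl fact.
  replace (b - INR 2) with (- (2 - b)) by (simpl; ring).
  rewrite !Rpower_Ropp, Rpower_pow by lra. simpl. field. lra.
Qed.

Lemma log_ratio_alpha (a b c : R) (n j : nat) : (1 <= n)%nat ->
  ln (alpha_abc a b c (n + j) / alpha_abc a b c n) =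
  a * log1p (INR j / INR n) + c * Rpower (INR n) b * (pow1p b (INR j / INR n) - 1).
Proof.
  intros Hn. assert (HN : 0 < INR n) by (apply lt_0_INR; lia).
  assert (Hx : 0 < 1 + INR j / INR n)
    by (pose proof (Rdiv_le_0_compat _ _ (pos_INR j) HN); lra).
  assert (Hsplit : INR (n + j) = INR n * (1 + INR j / INR n)) by (rewrite plus_INR; field; lra).
  unfold alpha_abc, log1p, pow1p.
  rewrite ln_div by (apply Rmult_lt_0_compat; apply Rpower_pos || apply exp_pos).
  rewrite !ln_mult by (apply Rpower_pos || apply exp_pos).
  rewrite !ln_exp, !ln_Rpower, Hsplit, ln_mult by lra.
  rewrite <- Rpower_mult_distr by lra. ring.
Qed.

Lemma sum_f_R0_split3 (F : nat -> R) (m : nat) : (2 <= m)%nat ->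
  sum_f_R0 F m = F 0%nat + F 1%nat + F 2%nat + sum_3_to m F.
Proof.
  assert (Hfold : forall l z, fold_right Rplus z (map F l) = z + fold_right Rplus 0 (map F l))
    by (induction l as [| x l IH]; intros z; simpl; [ring | rewrite IH; ring]).
  intros Hm. induction Hm as [| m Hm IH]; [unfold sum_3_to; simpl; ring |].
  simpl sum_f_R0. rewrite IH. unfold sum_3_to.
  replace (S m - 2)%nat with (S (m - 2)) by lia.
  rewrite seq_S, map_app, fold_right_app. simpl.
  replace (S (S (S (m - 2)))) with (S m) by lia.
  rewrite (Hfold _ (F (S m) + 0)). ring.
Qed.

Lemma taylor_terms_coef (a b c : R) (n j k : nat) : (1 <= n)%nat ->
  (INR j / INR n) ^ k / INR (fact k) * (a * log1p_coef k + c * Rpower (INR n) b * falling k b)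
  = coef a b c k n * INR j ^ k.
Proof.
  intros Hn. assert (HN : 0 < INR n) by (apply lt_0_INR; lia).
  assert (Hfact : INR (fact k) <> 0) by (apply not_0_INR, fact_neq_0).
  unfold coef. replace (b - INR k) with (b + - INR k) by ring.
  rewrite Rpower_plus, Rpower_Ropp, Rpower_pow by lra.
  unfold Rdiv. rewrite Rpow_mult_distr, pow_inv. field. split; [exact Hfact |].
  apply pow_nonzero. lra.
Qed.

Lemma log_ratio_expansion (a b c : R) (m n j : nat) : (2 <= m)%nat -> (1 <= n)%nat ->
  ln (alpha_abc a b c (n + j) / alpha_abc a b c n)
  - (coef a b c 1 n * INR j + coef a b c 2 n * INR j ^ 2
     + sum_3_to m (fun k => coef a b c k n * INR j ^ k))
  = a * taylor_rem log1p m (INR j / INR n)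
    + c * Rpower (INR n) b * taylor_rem (pow1p b) m (INR j / INR n).
Proof.
  intros Hm Hn. set (x := INR j / INR n).
  assert (Hpoly : a * sum_f_R0 (fun k => x ^ k / INR (fact k) * Derive_n log1p k 0) m
                  + c * Rpower (INR n) b
                    * sum_f_R0 (fun k => x ^ k / INR (fact k) * Derive_n (pow1p b) k 0) m
                  = sum_f_R0 (fun k => coef a b c k n * INR j ^ k) m).
  { rewrite !scal_sum, <- sum_plus. apply sum_eq. intros k _.
    rewrite <- taylor_terms_coef, Derive_n_log1p_0, Derive_n_pow1p_0 by exact Hn.
    fold x. ring. }
  rewrite (sum_f_R0_split3 (fun k => coef a b c k n * INR j ^ k)) in Hpoly by exact Hm.
  cbv beta in Hpoly. rewrite coef_0, pow_1 in Hpoly.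
  rewrite log_ratio_alpha by exact Hn. fold x. unfold taylor_rem.
  simpl in Hpoly. lra.
Qed.

(* Each coefficient is [O(n^(b-k))]: the [log] part [n^-k] is dominated by the
   power part since [n >= 1] and [b > 0]. *)
Lemma coef_bound (a b c : R) (k : nat) : 0 < b ->
  exists K, forall n, (1 <= n)%nat -> Rabs (coef a b c k n) <= K * Rpower (INR n) (b - INR k).
Proof.
  intros Hb. exists ((Rabs (a * log1p_coef k) + Rabs (c * falling k b)) / INR (fact k)).
  intros n Hn. assert (HN : 1 <= INR n) by (apply (le_INR 1); lia).
  assert (Hfact : 0 < INR (fact k)) by (apply lt_0_INR, lt_O_fact).
  assert (Hdom : Rpower (INR n) (- INR k) <= Rpower (INR n) (b - INR k))
    by (apply Rle_Rpower; lra).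
  pose proof (Rpower_pos (INR n) (- INR k)). pose proof (Rpower_pos (INR n) (b - INR k)).
  pose proof (Rabs_pos (a * log1p_coef k)). pose proof (Rabs_pos (c * falling k b)).
  unfold coef. rewrite Rabs_div, (Rabs_pos_eq (INR _)) by lra.
  replace (_ / INR (fact k) * Rpower (INR n) (b - INR k))
    with ((Rabs (a * log1p_coef k) + Rabs (c * falling k b)) * Rpower (INR n) (b - INR k)
          / INR (fact k)) by (field; lra).
  apply Rmult_le_compat_r; [left; now apply Rinv_0_lt_compat |].
  eapply Rle_trans; [apply Rabs_triang |].
  rewrite !(Rabs_mult (_ * _) (Rpower _ _)), !(Rabs_pos_eq (Rpower _ _)) by lra.
  nra.
Qed.

Lemma ratio_pow_bound (m n j : nat) : (j <= S m)%nat -> (1 <= n)%nat ->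
  (INR j / INR n) ^ S m <= INR (S m) ^ S m * Rpower (INR n) (- INR (S m)).
Proof.
  intros Hj Hn. assert (HN : 0 < INR n) by (apply lt_0_INR; lia).
  rewrite Rpower_Ropp, Rpower_pow by lra.
  unfold Rdiv. rewrite Rpow_mult_distr, pow_inv.
  apply Rmult_le_compat_r; [left; apply Rinv_0_lt_compat, pow_lt; lra |].
  apply pow_incr. split; [apply pos_INR | now apply le_INR].
Qed.

Lemma taylor_rem_log1p_bound (m : nat) :
  exists B, 0 <= B /\ forall x, 0 < x <= 1 -> Rabs (taylor_rem log1p m x) <= B * x ^ S m.
Proof.
  exists (Rabs (falling m (-1)) * exp (Rabs (-1 - INR m))).
  split; [apply Rmult_le_pos; [apply Rabs_pos | left; apply exp_pos] |].
  apply taylor_rem_bound; [intros; now apply Derive_n_log1p |].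
  intros x Hx. now apply Derive_n_log1p.
Qed.

Lemma taylor_rem_pow1p_bound (e : R) (m : nat) :
  exists B, 0 <= B /\ forall x, 0 < x <= 1 -> Rabs (taylor_rem (pow1p e) m x) <= B * x ^ S m.
Proof.
  exists (Rabs (falling (S m) e) * exp (Rabs (e - INR (S m)))).
  split; [apply Rmult_le_pos; [apply Rabs_pos | left; apply exp_pos] |].
  apply taylor_rem_bound; [intros; now apply Derive_n_pow1p |].
  intros x Hx. now apply Derive_n_pow1p.
Qed.

Lemma expansion_error_bound (a b c : R) (m : nat) : 0 < b ->
  exists C, forall n j, (1 <= j <= m + 1)%nat -> (m + 1 <= n)%nat ->
    Rabs (a * taylor_rem log1p m (INR j / INR n)
          + c * Rpower (INR n) b * taylor_rem (pow1p b) m (INR j / INR n))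
    <= C * Rpower (INR n) (b - INR (m + 1)).
Proof.
  intros Hb. replace (m + 1)%nat with (S m) by lia.
  destruct (taylor_rem_log1p_bound m) as [B1 [HB1 HR1]].
  destruct (taylor_rem_pow1p_bound b m) as [B2 [HB2 HR2]].
  set (J := INR (S m) ^ S m).
  assert (HJ : 0 <= J) by apply pow_le, pos_INR.
  exists ((Rabs a * B1 + Rabs c * B2) * J). intros n j Hj Hn.
  assert (HN : 1 <= INR n) by (apply (le_INR 1); lia).
  set (x := INR j / INR n). set (Rn := Rpower (INR n) (- INR (S m))).
  assert (Hx : 0 < x <= 1).
  { assert (1 <= INR j <= INR n) by (split; [apply (le_INR 1) | apply le_INR]; lia).
    unfold x. split; [apply Rdiv_lt_0_compat; lra |].
    apply Rmult_le_reg_r with (INR n); [lra |].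
    unfold Rdiv. rewrite Rmult_assoc, Rinv_l; lra. }
  assert (Hxm : x ^ S m <= J * Rn) by (apply ratio_pow_bound; lia).
  assert (Hshift : Rpower (INR n) b * Rn = Rpower (INR n) (b - INR (S m)))
    by (unfold Rn; rewrite <- Rpower_plus; f_equal; ring).
  assert (Hdom : Rn <= Rpower (INR n) (b - INR (S m))) by (apply Rle_Rpower; lra).
  assert (E1 : Rabs (taylor_rem log1p m x) <= B1 * (J * Rn))
    by (eapply Rle_trans; [apply HR1, Hx | now apply Rmult_le_compat_l]).
  assert (E2 : Rabs (taylor_rem (pow1p b) m x) <= B2 * (J * Rn))
    by (eapply Rle_trans; [apply HR2, Hx | now apply Rmult_le_compat_l]).
  pose proof (Rabs_pos a). pose proof (Rabs_pos c). pose proof (Rpower_pos (INR n) b).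
  eapply Rle_trans; [apply Rabs_triang |].
  rewrite !Rabs_mult, (Rabs_pos_eq (Rpower _ b)) by lra.
  rewrite <- Hshift in *.
  assert (F1 : Rabs a * Rabs (taylor_rem log1p m x)
               <= Rabs a * B1 * J * (Rpower (INR n) b * Rn)).
  { apply Rle_trans with (Rabs a * (B1 * (J * Rn))); [now apply Rmult_le_compat_l |].
    rewrite !Rmult_assoc. repeat (apply Rmult_le_compat_l; [assumption |]). exact Hdom. }
  assert (F2 : Rabs c * Rpower (INR n) b * Rabs (taylor_rem (pow1p b) m x)
               <= Rabs c * B2 * J * (Rpower (INR n) b * Rn)).
  { apply Rle_trans with (Rabs c * Rpower (INR n) b * (B2 * (J * Rn)));
      [apply Rmult_le_compat_l; [apply Rmult_le_pos |]; lra | right; ring]. }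
  lra.
Qed.

(* Comparison principle: if [|u n| <= C n^(b-q)] and [d n^2 >= D n^(b-2)] with
   [D > 0], then [u = o(d^q)] as soon as [q > 2], because
   [n^(b-q) / n^((b-2)q/2) = n^(-b(q-2)/2) -> 0]. *)
Lemma little_o_of_power_bounds (u d : nat -> R) (b C D : R) (q : nat) :
  0 < b -> 0 < D -> (3 <= q)%nat ->
  eventually (fun n => Rabs (u n) <= C * Rpower (INR n) (b - INR q)) ->
  eventually (fun n => D * Rpower (INR n) (b - 2) <= d n ^ 2) ->
  little_o u (fun n => d n ^ q).
Proof.
  intros Hb HD Hq Hu Hd eps Heps.
  assert (Hq2 : 0 < b * (INR q - 2)).
  { apply Rmult_lt_0_compat; [exact Hb |]. apply le_INR in Hq. simpl in Hq. lra. }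
  pose proof (eventually_Rpower_ge _ (C ^ 2 / (eps ^ 2 * D ^ q)) Hq2) as Hgrow.
  destruct (filter_and _ _ Hgrow (filter_and _ _ Hu Hd)) as [N HN].
  exists N. intros n Hn. destruct (HN n Hn) as [Hg [Hun Hdn]].
  set (Y := C * Rpower (INR n) (b - INR q)) in *.
  assert (HY : 0 <= Y) by (pose proof (Rabs_pos (u n)); lra).
  assert (HDq : 0 < eps ^ 2 * D ^ q) by (apply Rmult_lt_0_compat; apply pow_lt; lra).
  assert (HC : C ^ 2 <= eps ^ 2 * D ^ q * Rpower (INR n) (b * (INR q - 2))).
  { apply Rmult_le_compat_l with (r := eps ^ 2 * D ^ q) in Hg; [| lra].
    replace (eps ^ 2 * D ^ q * (C ^ 2 / (eps ^ 2 * D ^ q))) with (C ^ 2) in Hg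
      by (field; repeat split; nra). exact Hg. }
  assert (Hdq : (D * Rpower (INR n) (b - 2)) ^ q <= (d n ^ 2) ^ q).
  { apply pow_incr. split; [| exact Hdn].
    apply Rmult_le_pos; [lra | left; apply Rpower_pos]. }
  assert (Hsq : Y ^ 2 <= (eps * Rabs (d n ^ q)) ^ 2).
  { rewrite Rpow_mult_distr, pow2_abs, <- pow_mult, Nat.mul_comm, pow_mult.
    rewrite Rpow_mult_distr, Rpower_pow_mult in Hdq.
    unfold Y. rewrite Rpow_mult_distr, Rpower_pow_mult.
    replace ((b - 2) * INR q) with (b * (INR q - 2) + (b - INR q) * INR 2) in Hdq
      by (simpl; ring).
    rewrite Rpower_plus in Hdq.
    pose proof (Rpower_pos (INR n) ((b - INR q) * INR 2)).
    pose proof (pow_lt D q HD). nra. }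
  pose proof (Rabs_pos (d n ^ q)).
  apply Rle_trans with Y; [exact Hun |].
  apply Rsqr_incr_0_var; [rewrite !Rsqr_pow2; exact Hsq | apply Rmult_le_pos; lra].
Qed.

Lemma kappa_abc_spec (a b c : R) : b * (b - 1) * c <> 0 ->
  (kappa_abc a b c = 1 \/ kappa_abc a b c = -1)
  /\ kappa_abc a b c * (b * (b - 1) * c) = Rabs (b * (b - 1) * c).
Proof.
  intros Hs. unfold kappa_abc, sgn.
  destruct (Rlt_dec 0 (b * (b - 1) * c)).
  - rewrite Rabs_pos_eq; lra.
  - destruct (Rlt_dec (b * (b - 1) * c) 0); [rewrite Rabs_left; lra | lra].
Qed.

Lemma delta_sq_kappa_coef (a b c : R) (n : nat) : (1 <= n)%nat ->
  delta_sq_abc a b c n = kappa_abc a b c * coef a b c 2 n.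
Proof. intros Hn. unfold delta_sq_abc. now rewrite coef_2. Qed.

Lemma kappa_delta_sq (a b c : R) (n : nat) :
  (1 <= n)%nat -> b * (b - 1) * c <> 0 -> 0 <= delta_sq_abc a b c n ->
  kappa_abc a b c * delta_abc a b c n ^ 2 = coef a b c 2 n.
Proof.
  intros Hn Hs Hd. unfold delta_abc. rewrite pow2_sqrt, delta_sq_kappa_coef by assumption.
  destruct (kappa_abc_spec a b c Hs) as [[-> | ->] _]; ring.
Qed.

(* [delta(n)^2 = kappa (-a)/2 n^-2 + |b(b-1)c|/2 n^(b-2)]: the second term dominates. *)
Lemma delta_sq_split (a b c : R) (n : nat) : (1 <= n)%nat -> b * (b - 1) * c <> 0 ->
  delta_sq_abc a b c n = kappa_abc a b c * - a / 2 * Rpower (INR n) (- INR 2)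
                         + Rabs (b * (b - 1) * c) / 2 * Rpower (INR n) (b - INR 2).
Proof.
  intros Hn Hs. rewrite delta_sq_kappa_coef by exact Hn.
  destruct (kappa_abc_spec a b c Hs) as [_ Hks]. rewrite <- Hks.
  unfold coef. simpl log1p_coef. simpl falling. simpl fact. simpl INR. field.
Qed.

(* Eventually [delta(n)^2 >= |b(b-1)c|/4 n^(b-2)], since [n^b] outgrows [2|a|/|b(b-1)c|]. *)
Lemma delta_sq_lower (a b c : R) : 0 < b -> b * (b - 1) * c <> 0 ->
  eventually (fun n => (1 <= n)%nat /\
    Rabs (b * (b - 1) * c) / 4 * Rpower (INR n) (b - 2) <= delta_sq_abc a b c n).
Proof.
  intros Hb Hs. set (s := Rabs (b * (b - 1) * c)).
  assert (Hs0 : 0 < s) by (now apply Rabs_pos_lt).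
  destruct (eventually_Rpower_ge b (2 * Rabs a / s) Hb) as [N HN].
  exists (Nat.max 1 N). intros n Hn. split; [lia |].
  assert (Hbig : 2 * Rabs a <= s * Rpower (INR n) b).
  { specialize (HN n ltac:(lia)).
    apply Rmult_le_compat_l with (r := s) in HN; [| lra].
    replace (s * (2 * Rabs a / s)) with (2 * Rabs a) in HN by (field; lra). exact HN. }
  assert (Hka : - Rabs a <= kappa_abc a b c * - a).
  { destruct (kappa_abc_spec a b c Hs) as [[-> | ->] _];
      pose proof (Rle_abs a); pose proof (Rle_abs (- a)); rewrite Rabs_Ropp in *; lra. }
  rewrite delta_sq_split by (lia || exact Hs). fold s.
  replace (b - 2) with (b + - INR 2) by (simpl; ring).
  replace (b - INR 2) with (b + - INR 2) by ring. rewrite !Rpower_plus.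
  pose proof (Rpower_pos (INR n) (- INR 2)). nra.
Qed.

(* For [n >= 1], [delta(n)^2 <= (|a|/2 + |b(b-1)c|/2) n^(b-2)] as [n^-2 <= n^(b-2)]. *)
Lemma delta_sq_upper (a b c : R) (n : nat) : (1 <= n)%nat -> 0 < b -> b * (b - 1) * c <> 0 ->
  delta_sq_abc a b c n <= (Rabs a / 2 + Rabs (b * (b - 1) * c) / 2) * Rpower (INR n) (b - 2).
Proof.
  intros Hn Hb Hs. assert (HN : 1 <= INR n) by (apply (le_INR 1); lia).
  rewrite delta_sq_split by assumption.
  replace (b - INR 2) with (b - 2) by (simpl; ring).
  assert (Hka : kappa_abc a b c * - a <= Rabs a).
  { destruct (kappa_abc_spec a b c Hs) as [[-> | ->] _];
      pose proof (Rle_abs a); pose proof (Rle_abs (- a)); rewrite Rabs_Ropp in *; lra. }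
  assert (Hdom : Rpower (INR n) (- INR 2) <= Rpower (INR n) (b - 2))
    by (apply Rle_Rpower; simpl; lra).
  pose proof (Rpower_pos (INR n) (- INR 2)). pose proof (Rabs_pos a). nra.
Qed.

(* Since [b < 2], [delta(n)^2 = O(n^(b-2))] tends to [0], hence so does [delta(n)]. *)
Lemma delta_abc_tends_to_0 (a b c : R) : 0 < b -> b < 2 -> b * (b - 1) * c <> 0 ->
  tends_to_0 (delta_abc a b c).
Proof.
  intros Hb Hb2 Hs eps Heps.
  set (K := Rabs a / 2 + Rabs (b * (b - 1) * c) / 2).
  assert (HK : 0 <= K)
    by (unfold K; pose proof (Rabs_pos a); pose proof (Rabs_pos (b * (b - 1) * c)); lra).
  assert (He : 0 < (eps / 2) ^ 2) by (apply pow_lt; lra).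
  destruct (eventually_Rpower_ge (2 - b) (K / (eps / 2) ^ 2) ltac:(lra)) as [N HN].
  exists (Nat.max 1 N). intros n Hn.
  specialize (HN n ltac:(lia)).
  pose proof (delta_sq_upper a b c n ltac:(lia) Hb Hs) as Hup. fold K in Hup.
  assert (Hsmall : delta_sq_abc a b c n <= (eps / 2) ^ 2).
  { replace (b - 2) with (- (2 - b)) in Hup by ring. rewrite Rpower_Ropp in Hup.
    pose proof (Rpower_pos (INR n) (2 - b)).
    apply Rmult_le_compat_l with (r := (eps / 2) ^ 2) in HN; [| lra].
    replace ((eps / 2) ^ 2 * (K / (eps / 2) ^ 2)) with K in HN by (field; lra).
    apply Rle_trans with (K * / Rpower (INR n) (2 - b)); [exact Hup |].
    apply Rmult_le_reg_r with (Rpower (INR n) (2 - b)); [lra |].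
    rewrite Rmult_assoc, Rinv_l by lra. lra. }
  unfold delta_abc. rewrite Rabs_pos_eq by apply sqrt_pos.
  apply sqrt_le_1_alt in Hsmall. rewrite sqrt_pow2 in Hsmall by lra. lra.
Qed.

Theorem proposition7p1 (a b c : R) (hb0 : 0 < b) (hb2 : b < 2) (hb1 : b <> 1) (hc : c <> 0) :
  (exists N : nat, forall n : nat, (N <= n)%nat -> 0 < delta_sq_abc a b c n) /\
  (forall m : nat, (2 <= m)%nat ->
     log_polynomial m (alpha_abc a b c) (A_abc a b c) (delta_abc a b c) (kappa_abc a b c)).
Proof.
  assert (Hs : b * (b - 1) * c <> 0)
    by (repeat apply Rmult_integral_contrapositive_currified; lra).
  set (D := Rabs (b * (b - 1) * c) / 4).
  assert (HD : 0 < D) by (unfold D; pose proof (Rabs_pos_lt _ Hs); lra).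
  pose proof (delta_sq_lower a b c hb0 Hs) as Hlow. fold D in Hlow.
  assert (Hpos : eventually (fun n => (1 <= n)%nat /\ 0 < delta_sq_abc a b c n)).
  { destruct Hlow as [N HN]. exists N. intros n Hn. destruct (HN n Hn) as [Hn1 Hd].
    pose proof (Rpower_pos (INR n) (b - 2)). split; [exact Hn1 | nra]. }
  (* On that tail the radicand is nonnegative, so [delta(n)^2 >= D n^(b-2)]. *)
  assert (Hdelta : eventually (fun n => D * Rpower (INR n) (b - 2) <= delta_abc a b c n ^ 2)).
  { destruct Hlow as [N HN]. exists N. intros n Hn. destruct (HN n Hn) as [_ Hd].
    unfold delta_abc. rewrite pow2_sqrt; [exact Hd |].
    pose proof (Rpower_pos (INR n) (b - 2)). nra. }
  split; [destruct Hpos as [N HN]; exists N; intros n Hn; apply HN, Hn |].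
  intros m Hm. repeat split; [exact Hm | apply (kappa_abc_spec a b c Hs) | | | |].
  - intros n _. apply Rmult_lt_0_compat; [apply Rpower_pos | apply exp_pos].
  - destruct Hpos as [N HN]. exists N. intros n Hn. apply sqrt_lt_R0, HN, Hn.
  - now apply delta_abc_tends_to_0.
  - exists (coef a b c). split.
    + intros k Hk. destruct (coef_bound a b c k hb0) as [K HK].
      apply (little_o_of_power_bounds _ _ b K D); try (assumption || lia).
      exists 1%nat. exact HK.
    + intros j Hj. destruct (expansion_error_bound a b c m hb0) as [C HC].
      apply (little_o_of_power_bounds _ _ b C D); try (assumption || lia).
      destruct Hpos as [N HN]. exists (Nat.max N (m + 1)). intros n Hn.
      destruct (HN n ltac:(lia)) as [Hn1 Hd].
      rewrite <- coef_1, kappa_delta_sq, log_ratio_expansion by (assumption || lra).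
      apply HC; lia.
Qed.
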